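(* Let $B_a=(\{u,v\},[h];E_a)$ and $B_b=(\{u,v\},[h];E_b)$ be bipartite graphs distributed as $(B_a,B_b)\sim ER(2,h;\mathbf p)$. Let $\mathcal E^M(B_a,B_b)$ be the event that \[ \|\mathrm{sig}'_a(v)-\mathrm{sig}'_b(u)\|\le\|\mathrm{sig}'_a(u)-\mathrm{sig}'_b(u)\|\quad\text{or}\quad \|\mathrm{sig}'_a(u)-\mathrm{sig}'_b(v)\|\le\|\mathrm{sig}'_a(v)-\mathrm{sig}'_b(v)\|. \] Then $\Pr[\mathcal E^M(B_a,B_b)]\le 2\exp(-h\rho^2)$, where \[ \rho\triangleq\sqrt{p_{00}p_{1*}+p_{11}p_{0*}}-\sqrt{p_{10}p_{0*}+p_{01}p_{1*}}. \]
   Context: $\mathbf p=(p_{11},p_{10},p_{01},p_{00})$ is a probability vector, $p_{1*}=p_{11}+p_{10}$, $p_{0*}=p_{01}+p_{00}$. Correlated bipartite model $ER(2,h;\mathbf p)$: $B_a$ and $B_b$ are bipartite graphs with left vertex set $\{u,v\}$ and right vertex set $[h]$; for each left vertex $x$ and right vertex $j$, independently over all such pairs, $(\mathbf 1[(x,j)\in E_a],\mathbf 1[(x,j)\in E_b])$ equals $(1,1),(1,0),(0,1),(0,0)$ with probabilities $p_{11},p_{10},p_{01},p_{00}$. Bipartite signature: $\mathrm{sig}'_a(x)\in\{0,1\}^h$ has $i$-th coordinate $\mathbf 1[(x,i)\in E_a]$, and $\mathrm{sig}'_b$ analogously for $B_b$. $\|\cdot\|$ denotes Hamming weight (so $\|s-t\|$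 is Hamming distance).
   Formalization: The bound $\Pr[\mathcal E^M(B_a,B_b)]\le 2\exp(-h\rho^2)$ is asserted only for probability vectors with ρ ≥ 0. The statement above fails without it. *)

From HB Require Import structures.
From mathcomp Require Import all_boot all_order all_algebra.
From mathcomp Require Import reals.
From mathcomp.analysis Require Import sequences exp.
Set Implicit Arguments. Unset Strict Implicit. Unset Printing Implicit Defensive.
Import Order.TTheory GRing.Theory Num.Theory.
Local Open Scope ring_scope.

(* Left vertex set {u,v} is 'I_2 with u = 0, v = 1; right vertex set [h] is 'I_h.
   An outcome of ER(2,h;p) is the joint edge-indicator pair
   (1[(x,j) in E_a], 1[(x,j) in E_b]) for every pair (x,j). *)
Definition config (h : nat) := {ffun 'I_2 * 'I_h -> bool * bool}.

Definition vu : 'I_2 := ord0.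
Definition vv : 'I_2 := ord_max.

Definition pair_prob (R : realType) (p11 p10 p01 p00 : R) (o : bool * bool) : R :=
  match o with
  | (true, true) => p11
  | (true, false) => p10
  | (false, true) => p01
  | (false, false) => p00
  end.

Definition config_prob (R : realType) (p11 p10 p01 p00 : R) h (w : config h) : R :=
  \prod_(k : 'I_2 * 'I_h) pair_prob p11 p10 p01 p00 (w k).

Definition Pr (R : realType) (p11 p10 p01 p00 : R) h (E : pred (config h)) : R :=
  \sum_(w : config h | E w) config_prob p11 p10 p01 p00 w.

Definition sig_a h (w : config h) (x : 'I_2) : h.-tuple bool :=
  [tuple (w (x, j)).1 | j < h].
Definition sig_b h (w : config h) (x : 'I_2) : h.-tuple bool :=
  [tuple (w (x, j)).2 | j < h].

Definition hamming h (s t : h.-tuple bool) : nat :=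
  #|[set j : 'I_h | tnth s j != tnth t j]|.

Definition event_EM h (w : config h) : bool :=
  (hamming (sig_a w vv) (sig_b w vu) <= hamming (sig_a w vu) (sig_b w vu))%N
  || (hamming (sig_a w vu) (sig_b w vv) <= hamming (sig_a w vv) (sig_b w vv))%N.

Definition rho (R : realType) (p11 p10 p01 p00 : R) : R :=
  Num.sqrt (p00 * (p11 + p10) + p11 * (p01 + p00))
  - Num.sqrt (p10 * (p01 + p00) + p01 * (p11 + p10)).

From Pilot Require Import Defs.
From HB Require Import structures.
From mathcomp Require Import all_boot all_order all_algebra.
From mathcomp Require Import reals.
From mathcomp.analysis Require Import sequences exp.
From mathcomp Require Import zify ring lra.
Set Implicit Arguments. Unset Strict Implicit. Unset Printing Implicit Defensive.
Import Order.TTheory GRing.Theory Num.Theory.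
Local Open Scope ring_scope.

(* Fix the correct vertex x and the decoy y.  Column j gives X_j = [sig'_a(y)_j <> sig'_b(x)_j]
   and Y_j = [sig'_a(x)_j <> sig'_b(x)_j]; the columns are i.i.d. and the bad event is
   sum_j X_j <= sum_j Y_j.  A column has X_j > Y_j with probability A = p00 p1* + p11 p0* and
   X_j < Y_j with probability B = p10 p0* + p01 p1*.  Markov's inequality for the weight
   b^(sum_j (Y_j - X_j)), b = sqrt(A/B), bounds the bad event by
   (1 + (1/b - 1) A + (b - 1) B)^h = (1 - rho^2)^h <= exp(-h rho^2).  If B = 0, columns with
   X_j < Y_j almost surely do not occur and the weight 0^(#{j | X_j > Y_j}) does the job.
   A union bound over the two choices of x gives the factor 2. *)

Lemma card_setD_le (T : finType) (A B : {set T}) :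
  (#|A| <= #|B|)%N -> (#|A :\: B| <= #|B :\: A|)%N.
Proof. by have := cardsID B A; have := cardsID A B; rewrite setIC; lia. Qed.

Lemma big_pairE (R : Type) (idx : R) (op : Monoid.com_law idx) (I J : finType)
    (g : I * J -> R) :
  \big[op/idx]_p g p = \big[op/idx]_i \big[op/idx]_j g (i, j).
Proof. by rewrite pair_bigA; apply: eq_bigr => -[]. Qed.

Lemma exprn_1subr_le_expR (R : realType) (n : nat) (x : R) :
  x <= 1 -> (1 - x) ^+ n <= expR (- (n%:R * x)).
Proof.
move=> x_le1; rewrite -mulrN expRM_natl.
apply: lerXn2r; rewrite ?nnegrE ?subr_ge0 ?(ltW (expR_gt0 _)) //.
by have := expR_ge1Dx (- x); lra.
Qed.

Lemma exprn_pair_ge1 (R : numDomainType) (a b : R) (m n : nat) :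
  a * b = 1 -> 1 <= b -> (m <= n)%N -> 1 <= a ^+ m * b ^+ n.
Proof.
move=> ab_eq1 b_ge1 mn; rewrite -(subnK mn) exprD mulrCA -exprMn ab_eq1 expr1n mulr1.
exact: exprn_ege1.
Qed.

Section IidChernoff.
Variables (R : realType) (T : finType) (h : nat).

Lemma sum_ffun_prod (H : T -> R) :
  \sum_(F : {ffun 'I_h -> T}) \prod_(j < h) H (F j) = (\sum_o H o) ^+ h.
Proof. by rewrite -(bigA_distr_bigA (fun _ o => H o)) prodr_const card_ord. Qed.

Lemma iid_chernoff (q G : T -> R) (E : pred {ffun 'I_h -> T}) :
  (forall o, 0 <= q o) -> (forall o, 0 <= G o) ->
  (forall F, E F -> (forall j, q (F j) != 0) -> 1 <= \prod_j G (F j)) ->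
  \sum_(F | E F) \prod_j q (F j) <= (\sum_o q o * G o) ^+ h.
Proof.
move=> q_ge0 G_ge0 G_ge1.
rewrite -sum_ffun_prod [leRHS](bigID E) /= -[leLHS]addr0; apply: lerD.
  apply: ler_sum => F EF; rewrite big_split /=.
  have [->|qF_neq0] := eqVneq (\prod_j q (F j)) 0; first by rewrite mul0r.
  have qF_gt0 : 0 < \prod_j q (F j) by rewrite lt_def qF_neq0 prodr_ge0.
  by rewrite ler_pMr // G_ge1 // => j; apply: (prodf_neq0 _ _ qF_neq0).
by apply: sumr_ge0 => F _; apply: prodr_ge0 => j _; rewrite mulr_ge0.
Qed.

End IidChernoff.

Lemma I2_other (i x y : 'I_2) : x != y -> i != x -> i = y.
Proof.
move=> xy ix; apply/val_inj; move: xy ix; rewrite -!(inj_eq val_inj) /=.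
by have := ltn_ord i; have := ltn_ord x; have := ltn_ord y; lia.
Qed.

(* The outcomes of the pairs (x, j) and (y, j), in this order. *)
Definition column := ((bool * bool) * (bool * bool))%type.

Definition config_of_columns h (x : 'I_2) (F : {ffun 'I_h -> column}) : config h :=
  [ffun k => if k.1 == x then (F k.2).1 else (F k.2).2].

Definition columns_of_config h (x y : 'I_2) (w : config h) : {ffun 'I_h -> column} :=
  [ffun j => (w (x, j), w (y, j))].

Lemma config_of_columns_bij h (x y : 'I_2) :
  x != y -> bijective (@config_of_columns h x).
Proof.
move=> xy; exists (columns_of_config x y).
  move=> F; apply/ffunP => j; rewrite !ffunE /= eqxx eq_sym (negbTE xy).
  by case: (F j).
move=> w; apply/ffunP => -[i j]; rewrite !ffunE /=.
by case: eqP => [-> // | /eqP ix]; rewrite (I2_other xy ix).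
Qed.

Definition cross_mismatch (o : column) : bool := o.2.1 != o.1.2.
Definition self_mismatch (o : column) : bool := o.1.1 != o.1.2.

Definition confused h (x y : 'I_2) (w : config h) : bool :=
  (hamming (sig_a w y) (sig_b w x) <= hamming (sig_a w x) (sig_b w x))%N.

Lemma confused_columns h (x y : 'I_2) (F : {ffun 'I_h -> column}) : x != y ->
  confused x y (config_of_columns x F) =
  (#|[set j | cross_mismatch (F j)]| <= #|[set j | self_mismatch (F j)]|)%N.
Proof.
move=> xy; rewrite /confused /hamming; congr (_ <= _)%N; apply: eq_card => j.
  by rewrite !inE !tnth_mktuple !ffunE /= eqxx [y == x]eq_sym (negbTE xy).
by rewrite !inE !tnth_mktuple !ffunE /= eqxx.
Qed.

Definition tilt (R : realType) (a b : R) (o : column) : R :=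
  (if cross_mismatch o && ~~ self_mismatch o then a else 1) *
  (if ~~ cross_mismatch o && self_mismatch o then b else 1).

Lemma prod_tilt (R : realType) h (a b : R) (F : {ffun 'I_h -> column}) :
  \prod_j tilt a b (F j) =
  a ^+ #|[set j | cross_mismatch (F j)] :\: [set j | self_mismatch (F j)]| *
  b ^+ #|[set j | self_mismatch (F j)] :\: [set j | cross_mismatch (F j)]|.
Proof.
rewrite big_split /= -!prodr_const; congr (_ * _); rewrite [RHS]big_mkcond /=;
  apply: eq_bigr => j _; by rewrite !inE // andbC.
Qed.

Section ErdosRenyiPair.
Variables (R : realType) (p11 p10 p01 p00 : R).
Hypotheses (p11_ge0 : 0 <= p11) (p10_ge0 : 0 <= p10) (p01_ge0 : 0 <= p01) (p00_ge0 : 0 <= p00).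
Hypothesis p_sum1 : p11 + p10 + p01 + p00 = 1.

Notation pp := (pair_prob p11 p10 p01 p00).
Notation Pr := (Pr p11 p10 p01 p00).

Definition column_prob (o : column) : R := pp o.1 * pp o.2.

Definition p_cross_only : R := p00 * (p11 + p10) + p11 * (p01 + p00).
Definition p_self_only : R := p10 * (p01 + p00) + p01 * (p11 + p10).

Lemma rhoE : rho p11 p10 p01 p00 = Num.sqrt p_cross_only - Num.sqrt p_self_only.
Proof. by []. Qed.

Lemma pair_prob_ge0 o : 0 <= pp o.
Proof. by case: o => [[] []]. Qed.

Lemma column_prob_ge0 o : 0 <= column_prob o.
Proof. by rewrite mulr_ge0 ?pair_prob_ge0. Qed.

Lemma config_prob_ge0 h (w : config h) : 0 <= config_prob p11 p10 p01 p00 w.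
Proof. by apply: prodr_ge0 => k _; apply: pair_prob_ge0. Qed.

Lemma Pr_orb_le h (E1 E2 : pred (config h)) :
  Pr (fun w => E1 w || E2 w) <= Pr E1 + Pr E2.
Proof.
rewrite /Defs.Pr big_mkcond [X in _ <= X + _]big_mkcond [X in _ <= _ + X]big_mkcond.
rewrite -big_split /=.
apply: ler_sum => w _; have := config_prob_ge0 w.
by case: (E1 w); case: (E2 w) => /=; lra.
Qed.

Lemma config_prob_columns h (x y : 'I_2) (F : {ffun 'I_h -> column}) : x != y ->
  config_prob p11 p10 p01 p00 (config_of_columns x F) = \prod_j column_prob (F j).
Proof.
move=> xy; rewrite /config_prob big_pairE exchange_big /=; apply: eq_bigr => j _.
rewrite (bigD1 x) //= ffunE /= eqxx; congr (_ * _).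
rewrite (big_pred1 y) ?ffunE /= 1?eq_sym ?(negbTE xy) // => i /=.
by apply/idP/eqP => [/(I2_other xy) | ->]; last by rewrite eq_sym.
Qed.

Lemma Pr_confused_columns h (x y : 'I_2) : x != y ->
  Pr (@confused h x y) =
  \sum_(F : {ffun 'I_h -> column} |
        (#|[set j | cross_mismatch (F j)]| <= #|[set j | self_mismatch (F j)]|)%N)
    \prod_j column_prob (F j).
Proof.
move=> xy; rewrite /Defs.Pr (reindex _ (onW_bij _ (config_of_columns_bij h xy))) /=.
by apply: eq_big => [F | F _]; rewrite ?(confused_columns _ xy) ?(config_prob_columns _ xy).
Qed.

Lemma sum_column_prob_tilt (a b : R) :
  \sum_o column_prob o * tilt a b o =
  1 + (a - 1) * p_cross_only + (b - 1) * p_self_only.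
Proof.
rewrite big_pairE /=; under eq_bigr do rewrite big_pairE /=.
rewrite big_pairE /= !big_bool /column_prob /tilt /cross_mismatch /self_mismatch /=.
rewrite /p_cross_only /p_self_only.
have -> : p00 = 1 - p11 - p10 - p01 by rewrite -p_sum1; ring.
ring.
Qed.

Lemma tilt_ge0 (a b : R) o : 0 <= a -> 0 <= b -> 0 <= tilt a b o.
Proof. by move=> a_ge0 b_ge0; rewrite /tilt mulr_ge0 //; case: ifP. Qed.

Lemma Pr_confused_le_tilt h (x y : 'I_2) (a b : R) : x != y -> 0 <= a -> 0 <= b ->
  (forall F : {ffun 'I_h -> column},
     (#|[set j | cross_mismatch (F j)]| <= #|[set j | self_mismatch (F j)]|)%N ->
     (forall j, column_prob (F j) != 0) ->
     1 <= \prod_j tilt a b (F j)) ->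
  Pr (@confused h x y) <= (1 + (a - 1) * p_cross_only + (b - 1) * p_self_only) ^+ h.
Proof.
move=> xy a_ge0 b_ge0 tilt_ge1; rewrite Pr_confused_columns // -sum_column_prob_tilt.
by apply: iid_chernoff => // o; rewrite ?column_prob_ge0 ?tilt_ge0.
Qed.

Lemma column_prob_self_only_eq0 o : p_self_only = 0 ->
  ~~ cross_mismatch o && self_mismatch o -> column_prob o = 0.
Proof.
move=> /eqP; rewrite paddr_eq0 ?mulr_ge0 ?addr_ge0 // !mulrDr.
rewrite !paddr_eq0 ?mulr_ge0 // => /andP [/andP [/eqP e1 /eqP e2] /andP [/eqP e3 /eqP e4]].
by case: o => [[[] []] [[] []]]; rewrite /column_prob /cross_mismatch /self_mismatch.
Qed.

Lemma Pr_confused_le h (x y : 'I_2) : x != y -> 0 <= rho p11 p10 p01 p00 ->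
  Pr (@confused h x y) <= (1 - rho p11 p10 p01 p00 ^+ 2) ^+ h.
Proof.
move=> xy; rewrite rhoE.
have A_ge0 : 0 <= p_cross_only by rewrite addr_ge0 // mulr_ge0 // addr_ge0.
have B_ge0 : 0 <= p_self_only by rewrite addr_ge0 // mulr_ge0 // addr_ge0.
have [B0 | B_neq0] := eqVneq p_self_only 0.
  rewrite B0 sqrtr0 subr0 sqr_sqrtr // => _.
  have -> : 1 - p_cross_only = 1 + (0 - 1) * p_cross_only + (1 - 1) * p_self_only.
    by rewrite B0; ring.
  apply: Pr_confused_le_tilt => // F CS supp; rewrite prod_tilt.
  have SC0 : #|[set j | self_mismatch (F j)] :\: [set j | cross_mismatch (F j)]| = 0%N.
    apply/eqP; rewrite cards_eq0 -subset0; apply/subsetP => j; rewrite !inE => /andP [nC S].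
    by have := supp j; rewrite column_prob_self_only_eq0 ?eqxx // nC S.
  by have := card_setD_le CS; rewrite SC0 leqn0 => /eqP ->; rewrite mulr1.
set sA := Num.sqrt p_cross_only; set sB := Num.sqrt p_self_only => rho_ge0.
have sB_gt0 : 0 < sB by rewrite sqrtr_gt0 lt_def B_neq0.
have sA_gt0 : 0 < sA by lra.
have -> : 1 - (sA - sB) ^+ 2 = 1 + (sB / sA - 1) * p_cross_only + (sA / sB - 1) * p_self_only.
  by rewrite -(sqr_sqrtr A_ge0) -(sqr_sqrtr B_ge0) -/sA -/sB; field; rewrite ?gt_eqF.
apply: Pr_confused_le_tilt; rewrite ?divr_ge0 ?ltW // => F CS _; rewrite prod_tilt.
apply: exprn_pair_ge1 (card_setD_le CS).
  by field; rewrite ?gt_eqF.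
by rewrite ler_pdivlMr // mul1r; lra.
Qed.

Lemma sqr_rho_le1 : 0 <= rho p11 p10 p01 p00 -> rho p11 p10 p01 p00 ^+ 2 <= 1.
Proof.
rewrite rhoE => rho_ge0.
have A_ge0 : 0 <= p_cross_only by rewrite addr_ge0 // mulr_ge0 // addr_ge0.
have A_le1 : p_cross_only <= 1.
  apply: (@le_trans _ _ ((p00 + p11) * (p11 + p10 + p01 + p00))).
    rewrite -subr_ge0 (_ : _ - _ = p00 * (p01 + p00) + p11 * (p11 + p10)).
      by rewrite addr_ge0 // mulr_ge0 // addr_ge0.
    by rewrite /p_cross_only; ring.
  rewrite p_sum1 mulr1 -p_sum1 -subr_ge0 (_ : _ - _ = p10 + p01) ?addr_ge0 //.
  by ring.
have := sqr_sqrtr A_ge0; have := sqrtr_ge0 p_self_only; nra.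
Qed.

Lemma Pr_confused_le_expR h (x y : 'I_2) : x != y -> 0 <= rho p11 p10 p01 p00 ->
  Pr (@confused h x y) <= expR (- (h%:R * rho p11 p10 p01 p00 ^+ 2)).
Proof.
move=> xy rho_ge0; apply: le_trans (exprn_1subr_le_expR _ (sqr_rho_le1 rho_ge0)).
exact: Pr_confused_le.
Qed.

End ErdosRenyiPair.

Theorem lemma4p9 (R : realType) (h : nat) (p11 p10 p01 p00 : R) :
  0 <= p11 -> 0 <= p10 -> 0 <= p01 -> 0 <= p00 ->
  p11 + p10 + p01 + p00 = 1 ->
  0 <= rho p11 p10 p01 p00 ->
  Pr p11 p10 p01 p00 (@event_EM h)
    <= 2 * expR (- (h%:R * (rho p11 p10 p01 p00) ^+ 2)).
Proof.
move=> p11_ge0 p10_ge0 p01_ge0 p00_ge0 p_sum1 rho_ge0.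
have Pr_confused_le_bound := Pr_confused_le_expR
  p11_ge0 p10_ge0 p01_ge0 p00_ge0 p_sum1 h.
apply: le_trans (Pr_orb_le p11_ge0 p10_ge0 p01_ge0 p00_ge0 (confused vu vv) (confused vv vu)) _.
have := Pr_confused_le_bound _ _ (isT : vu != vv) rho_ge0.
have := Pr_confused_le_bound _ _ (isT : vv != vu) rho_ge0.
lra.
Qed.
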